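(* Let $n\geq 2$, $1\leq k\leq n-1$, and $q=p^h$ with $p>5$ prime and $h\geq 1$. Let $B$ be a minimal $k$-blocking set in $\mathrm{PG}(n,q)$ such that every $(n-k)$-dimensional subspace of $\mathrm{PG}(n,q)$ meets $B$ in $1 \pmod p$ points. If $\theta_k<|B|<2q^k$, then \[ |B| < \frac{3(q^k-q^k/p)}{2}. \]
   Context: $\mathrm{PG}(n,q)$ is the $n$-dimensional projective space over $\mathbb{F}_q$, and $\theta_m=(q^{m+1}-1)/(q-1)$ is the number of points of $\mathrm{PG}(m,q)$. A $k$-blocking set of $\mathrm{PG}(n,q)$ is a set $K$ of points such that every $(n-k)$-dimensional subspace meets $K$. A point $P\in K$ is essential if some $(n-k)$-dimensional subspace meets $K$ exactly in $P$; $K$ is minimal if every point of $K$ is essential (equivalently, no proper subset of $K$ is a $k$-blocking set). *)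

(* PG(n,q) modelled via the row spaces of F^(n+1), F a finite field. *)
From HB Require Import structures.
From mathcomp Require Import all_boot all_order all_algebra.
Set Implicit Arguments. Unset Strict Implicit. Unset Printing Implicit Defensive.
Import GRing.Theory Num.Theory.

Local Open Scope ring_scope.

Section PG.
Variables (F : finFieldType) (n : nat).

(* A point of PG(n,F) is a 1-dimensional subspace of F^(n+1), represented
   canonically by the square matrix <<X>> (genmx) of rank 1. *)
Definition is_point (X : 'M[F]_(n.+1)) : bool :=
  (X == <<X>>%MS) && (\rank X == 1)%N.

(* An m-dimensional projective subspace is the row space of a matrix of rank m+1. *)
Definition is_proj_subspace (m : nat) (S : 'M[F]_(n.+1)) : bool :=
  \rank S == m.+1.

Definition meet (K : {set 'M[F]_(n.+1)}) (S : 'M[F]_(n.+1)) : {set 'M[F]_(n.+1)} :=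
  [set P in K | (P <= S)%MS].

Definition point_set (K : {set 'M[F]_(n.+1)}) : Prop :=
  forall P, P \in K -> is_point P.

Definition blocking_set (k : nat) (K : {set 'M[F]_(n.+1)}) : Prop :=
  point_set K /\
  forall S, is_proj_subspace (n - k) S -> meet K S != set0.

Definition essential (k : nat) (K : {set 'M[F]_(n.+1)}) (P : 'M[F]_(n.+1)) : Prop :=
  exists S, is_proj_subspace (n - k) S /\ meet K S = [set P].

Definition minimal_blocking_set (k : nat) (K : {set 'M[F]_(n.+1)}) : Prop :=
  blocking_set k K /\ forall P, P \in K -> essential k K P.

End PG.

(* theta_m = (q^(m+1)-1)/(q-1) = 1 + q + ... + q^m *)
Definition theta (q m : nat) : nat := \sum_(i < m.+1) q ^ i.

From HB Require Import structures.
From mathcomp Require Import all_boot all_order all_algebra.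
From mathcomp Require Import ring lra zify.
Set Implicit Arguments. Unset Strict Implicit. Unset Printing Implicit Defensive.
Import Order.TTheory GRing.Theory Num.Theory.
Local Open Scope ring_scope.

(* Write N = n + 1, q = |F|, r = n - k + 1, so that the (n-k)-spaces of
   PG(n,q) are the row spaces of the rank-r matrices S.  Let b = |B|,
   T = |PG(n,q)|, D = |PG(n-k,q)| and i_S = |B /\ S|.
   - Point counts: a subspace of rank d has (q^d - 1)/(q - 1) points.
   - Pair counts: GL(N,q) is transitive on ordered pairs of distinct points,
     so the number c of rank-r matrices containing two distinct points is a
     constant.  Double counting (S, P, Q) then gives, for point sets K1 <= K2,
       sum_S |K1 /\ S| (|K2 /\ S| - 1) = |K1| (|K2| - 1) c.
   - Variance: i_S = 1 (mod p) gives (i_S - 1)(i_S - 1 - p) >= 0; summing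
     over S and substituting the pair counts (K = B or all points) yields
       (p+1) b (T-1) D <= b (b-1) D (D-1) + (p+1) T (T-1).
   - Estimates: with Q = q^k, T - 1 >= Q (D - 1) and 48 T <= 49 Q D; in an
     ordered field this quadratic inequality rules out 3(Q - Q/p)/2 <= b < 2Q
     once p >= 7.
   The theorem only uses that B is a set of points meeting every
   (n-k)-space in 1 mod p points and that 0 < |B| < 2 q^k. *)

Lemma sum_indicator (T : finType) (P Q : pred T) :
  (\sum_(x | P x) (Q x : nat) = #|[set x | P x & Q x]|)%N.
Proof.
rewrite (eq_bigr (fun x => if Q x then 1 else 0)%N); last by move=> x _; case: (Q x).
by rewrite -big_mkcondr sum1_card; apply: eq_card => x; rewrite !inE.
Qed.

Section PointCount.
Variables (F : finFieldType) (n : nat).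
Local Notation N := n.+1.

Definition points : {set 'M[F]_N} := [set P | is_point P].

Lemma point_sub (P : 'M[F]_N) (v : 'rV[F]_N) :
  is_point P -> v != 0 -> (v <= P)%MS = (P == <<v>>%MS).
Proof.
case/andP=> /eqP eP /eqP rP nz; apply/idP/eqP => [sv|->]; last by rewrite genmxE.
have: (v == P)%MS by rewrite -(mxrank_leqif_eq sv).2 rP rank_rV nz.
by move/genmxP => ->.
Qed.

Lemma gen_point (v : 'rV[F]_N) : v != 0 -> is_point <<v>>%MS.
Proof. by move=> nz; rewrite /is_point genmx_id eqxx /= genmxE rank_rV nz. Qed.

Lemma card_row_space m (S : 'M[F]_(m, N)) :
  #|[set v : 'rV[F]_N | (v <= S)%MS]| = (#|F| ^ \rank S)%N.
Proof.
have ->: [set v : 'rV[F]_N | (v <= S)%MS] =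
   (fun w : 'rV[F]_(\rank S) => w *m row_base S) @: setT.
  apply/setP=> v; rewrite inE; apply/idP/imsetP => [sv|[w _ ->]].
    have: (v <= row_base S)%MS by rewrite eq_row_base.
    by case/submxP => D ->; exists D.
  by rewrite -(eq_row_base S) submxMl.
rewrite card_imset; last exact: row_free_inj (row_base_free S).
by rewrite cardsT card_mx mul1n.
Qed.

Lemma card_row_space_nz m (S : 'M[F]_(m, N)) :
  #|[set v : 'rV[F]_N | (v <= S)%MS & v != 0]| = (#|F| ^ \rank S - 1)%N.
Proof.
rewrite -card_row_space (cardsD1 0 [set v : 'rV[F]_N | (v <= S)%MS]).
rewrite inE sub0mx add1n subSS subn0.
by apply: eq_card => v; rewrite !inE andbC.
Qed.

(* A subspace of rank d contains (q^d - 1)/(q - 1) points: every nonzero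
   vector of S spans exactly one point of S, and every point has q - 1
   nonzero vectors. *)
Lemma card_points_in (S : 'M[F]_N) :
  (#|meet points S| * (#|F| - 1) = #|F| ^ \rank S - 1)%N.
Proof.
rewrite -card_row_space_nz -[#|[set v : 'rV[F]_N | _]|]sum1_card.
rewrite (eq_bigr (fun v => \sum_(P in meet points S) ((v <= P)%MS : nat))%N); last first.
  move=> v; rewrite inE => /andP[sv nz].
  rewrite (bigD1 <<v>>%MS) /=; last by rewrite !inE (gen_point nz) genmxE.
  rewrite genmxE submx_refl big1 // => P /andP[]; rewrite !inE => /andP[pP _] neq.
  by rewrite point_sub // (negPf neq).
rewrite exchange_big /= -sum_nat_const.
apply: eq_bigr => P; rewrite !inE => /andP[pP sP].
have rP : \rank P = 1%N by case/andP: pP => _ /eqP.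
rewrite sum_indicator; have := card_row_space_nz P; rewrite rP expn1 => <-.
apply: eq_card => v; rewrite !inE.
by case: (boolP (v <= P)%MS) => svP; rewrite ?andbF ?andbT // (submx_trans svP sP).
Qed.

Lemma card_points : (#|points| * (#|F| - 1) = #|F| ^ N - 1)%N.
Proof.
have -> : points = meet points 1%:M by apply/setP=> P; rewrite !inE submx1 andbT.
by rewrite card_points_in mxrank1.
Qed.

Lemma card_points_in_rank (S S' : 'M[F]_N) :
  \rank S = \rank S' -> #|meet points S| = #|meet points S'|.
Proof.
have q1 : (0 < #|F| - 1)%N by rewrite subn_gt0 card_finNzRing_gt1.
by move=> rS; apply/eqP; rewrite -(eqn_pmul2r q1) !card_points_in rS.
Qed.

End PointCount.

Section PairCount.
Variables (F : finFieldType) (n : nat).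
Local Notation N := n.+2.
Local Notation MN := 'M[F]_N.

Definition j0 : 'I_N := lshift n (lshift 1 (ord0 : 'I_1)).
Definition j1 : 'I_N := lshift n (rshift 1 (ord0 : 'I_1)).

Lemma point_nz (P : MN) : is_point P -> nz_row P != 0.
Proof. by case/andP=> _ /eqP rP; rewrite nz_row_eq0 -mxrank_eq0 rP. Qed.

Lemma point_gen (P : MN) : is_point P -> P = <<nz_row P>>%MS.
Proof. by move=> pP; apply/eqP; rewrite -point_sub ?nz_row_sub ?point_nz. Qed.

(* GL(N, F) is transitive on ordered pairs of distinct points: two distinct
   points are spanned by the first two rows of some invertible matrix. *)
Lemma pair_frame (P Q : MN) : is_point P -> is_point Q -> P != Q ->
  exists M : MN, [/\ M \in unitmx, P = <<row j0 M>>%MS & Q = <<row j1 M>>%MS].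
Proof.
move=> pP pQ nPQ; set u := nz_row P; set v := nz_row Q.
have nvu : ~~ (v <= u)%MS.
  apply: contra nPQ => svu; rewrite [Q]point_gen //.
  have svP : (v <= P)%MS by rewrite (submx_trans svu) ?nz_row_sub.
  by rewrite (point_sub pP (point_nz pQ)) in svP.
set U := col_mx u v.
have rU : \rank U = 2%N.
  apply/eqP; rewrite eqn_leq rank_leq_row /=.
  have ru : \rank u = 1%N by rewrite rank_rV point_nz.
  have : (\rank u < \rank (u + v)%MS)%N.
    apply: rank_ltmx; rewrite ltmxE addsmxSl /=.
    by apply: contra nvu; apply: submx_trans; rewrite addsmxSr.
  by rewrite ru addsmxE.
have eC : \rank U^C%MS = n by rewrite mxrank_compl rU subSS subSS subn0.
set M := col_mx U (castmx (eC, erefl N) (row_base U^C%MS)).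
have Mfull : row_full M.
  have ->: row_full M = row_full (U + U^C)%MS.
    apply: eq_row_full; apply: eqmx_trans (eqmx_sym (addsmxE _ _)) _.
    apply: adds_eqmx => //; exact: eqmx_trans (eqmx_cast _ _) (eq_row_base _).
  exact: addsmx_compl_full.
exists M; split; first by rewrite -row_full_unit.
- by rewrite /j0 /M (rowKu (lshift 1 (ord0 : 'I_1)) U) (rowKu (ord0 : 'I_1) u v)
    row_id -point_gen.
- by rewrite /j1 /M (rowKu (rshift 1 (ord0 : 'I_1)) U) (rowKd (ord0 : 'I_1) u v)
    row_id -point_gen.
Qed.

Definition through (r : nat) m1 m2 (P : 'M[F]_(m1, N)) (Q : 'M[F]_(m2, N)) :=
  [set S : MN | [&& \rank S == r, (P <= S)%MS & (Q <= S)%MS]].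

Definition ncommon (r : nat) : nat :=
  #|through r (row j0 (1%:M : MN)) (row j1 (1%:M : MN))|.

(* By transitivity, every pair of distinct points lies in the same number of
   rank-r matrices. *)
Lemma card_through (r : nat) (P Q : MN) : is_point P -> is_point Q -> P != Q ->
  #|through r P Q| = ncommon r.
Proof.
move=> pP pQ nPQ; have [M [uM eP eQ]] := pair_frame pP pQ nPQ.
have rowM S j : (row j 1%:M <= S *m invmx M)%MS = (row j M <= S)%MS.
  by rewrite -(submxMfree _ _ (_ : row_free M)) ?row_free_unit // mulmxKV // -row_mul mul1mx.
have rkM S : \rank (S *m invmx M) = \rank S by rewrite mxrankMfree ?row_free_unit ?unitmx_inv.
have eS S : ((P <= S)%MS = (row j0 M <= S)%MS) * ((Q <= S)%MS = (row j1 M <= S)%MS).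
  by rewrite eP eQ !genmxE.
rewrite /ncommon; have ->: through r (row j0 1%:M) (row j1 1%:M) = (fun S => S *m invmx M) @: through r P Q.
  apply/setP=> S; rewrite inE; apply/idP/imsetP => [|[T]].
    move=> /and3P[rS s0 s1]; exists (S *m M); last by rewrite mulmxK.
    by rewrite inE -rkM mulmxK // rS !eS -!rowM !mulmxK // s0 s1.
  by rewrite inE => /and3P[rT s0 s1] ->; rewrite rkM rT !rowM -!eS s0 s1.
by rewrite card_imset //; apply: can_inj (fun S => S *m M) _ => S; exact: mulmxKV.
Qed.

Lemma ncommon_gt0 (r : nat) : (2 <= r <= N)%N -> (0 < ncommon r)%N.
Proof.
case/andP=> r2 rN; apply/card_gt0P; exists (pid_mx r).
have rowpid (j : 'I_N) : (j < r)%N -> row j (1%:M : MN) = row j (pid_mx r).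
  by move=> jr; apply/rowP => i; rewrite !mxE jr andbT (inj_eq val_inj).
rewrite inE rank_pid_mx // eqxx !rowpid ?row_sub //.
exact: leq_trans r2.
Qed.

Definition pair_in (S P Q : MN) : nat := [&& P != Q, (P <= S)%MS & (Q <= S)%MS].

Lemma count_pairs_in (K1 K2 : {set MN}) (S : MN) : K1 \subset K2 ->
  (\sum_(P in K1) \sum_(Q in K2) pair_in S P Q =
   #|meet K1 S| * (#|meet K2 S| - 1))%N.
Proof.
move=> sK.
rewrite (eq_bigr (fun P => if (P <= S)%MS then (#|meet K2 S| - 1)%N else 0%N)); last first.
  move=> P PK1; case: ifP => sPS; last by rewrite big1 // => Q _; rewrite /pair_in sPS andbF.
  rewrite (eq_bigr (fun Q => ((Q <= S)%MS && (Q != P) : nat))); last first.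
    by move=> Q _; rewrite /pair_in sPS eq_sym andbC.
  rewrite sum_indicator (cardsD1 P (meet K2 S)) !inE (subsetP sK _ PK1) sPS.
  rewrite add1n subSS subn0; apply: eq_card => Q; rewrite !inE.
  by case: (Q == P); rewrite /= ?andbF ?andbT.
by rewrite -big_mkcondr sum_nat_const; congr (_ * _)%N; apply: eq_card => P; rewrite !inE.
Qed.

(* Double counting the triples (S, P, Q) with P != Q points of K1 resp. K2
   in the rank-r matrix S. *)
Lemma pair_count (r : nat) (K1 K2 : {set MN}) : K1 \subset K2 -> K2 \subset points F n.+1 ->
  (\sum_(S : MN | \rank S == r) #|meet K1 S| * (#|meet K2 S| - 1) =
   #|K1| * (#|K2| - 1) * ncommon r)%N.
Proof.
move=> sK12 sK2.
have ptK2 P : P \in K2 -> is_point P by move/(subsetP sK2); rewrite inE.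
have ptK1 P : P \in K1 -> is_point P by move/(subsetP sK12)/ptK2.
have meet1 K : meet K (1%:M : MN) = K by apply/setP => P; rewrite inE submx1 andbT.
rewrite -{2}(meet1 K1) -{2}(meet1 K2) -count_pairs_in // big_distrl /=.
rewrite (eq_bigr (fun S => \sum_(P in K1) \sum_(Q in K2) pair_in S P Q)%N); last first.
  by move=> S _; rewrite count_pairs_in.
rewrite exchange_big; apply: eq_bigr => P PK1; rewrite big_distrl /= exchange_big.
apply: eq_bigr => Q QK2; rewrite /pair_in !submx1 !andbT.
case: (eqVneq P Q) => [->|nPQ]; first by rewrite big1 // => S _; rewrite /pair_in eqxx.
rewrite mul1n -(card_through r (ptK1 _ PK1) (ptK2 _ QK2) nPQ) sum_indicator.
by apply: eq_card => S; rewrite !inE.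
Qed.

End PairCount.

(* If i = 1 (mod p) then (i - 1)(i - 1 - p) >= 0, i.e. i lies outside the open
   interval (1, p + 1); written without subtraction on the negative side. *)
Lemma mod1_quadratic (p i : nat) : (1 < p)%N -> i = 1 %[mod p] ->
  (p.+1 * i <= i * (i - 1) + p.+1)%N.
Proof.
move=> p1 hi; have e : (i = i %/ p * p + 1)%N by rewrite {1}(divn_eq i p) hi modn_small.
rewrite e; case: (i %/ p)%N => [|j]; nia.
Qed.

Section Variance.
Variables (F : finFieldType) (n r p D : nat) (K : {set 'M[F]_n.+2}).
Hypotheses (p_gt1 : (1 < p)%N) (r_bounds : (2 <= r <= n.+2)%N).
Hypothesis K_points : K \subset points F n.+1.
Hypothesis card_D : forall S : 'M[F]_n.+2, \rank S == r -> #|meet (points F n.+1) S| = D.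
Hypothesis K_mod : forall S : 'M[F]_n.+2, \rank S == r -> #|meet K S| = 1 %[mod p].

Local Notation b := #|K|.
Local Notation T := #|points F n.+1|.

(* The variance inequality: summing mod1_quadratic over all rank-r matrices S,
   weighted by D(D-1), and evaluating the three resulting sums with pair_count
   (for the pairs K x K, K x points and points x points) gives a quadratic
   constraint on b = |K| in terms of T = |PG(n+1, q)| and D = |PG(r-1, q)|. *)
Lemma variance_inequality :
  (p.+1 * b * (T - 1) * D <= b * (b - 1) * (D * (D - 1)) + p.+1 * (T * (T - 1)))%N.
Proof.
have c_gt0 : (0 < ncommon F n r)%N by apply: ncommon_gt0.
have pts_pts := pair_count r (subxx (points F n.+1)) (subxx _).
have K_pts := pair_count r K_points (subxx _).
have K_K := pair_count r (subxx K) K_points.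
rewrite (eq_bigr (fun=> D * (D - 1))%N) in pts_pts; last by move=> S /card_D ->.
rewrite (eq_bigr (fun S => #|meet K S| * (D - 1))%N) in K_pts; last by move=> S /card_D ->.
rewrite -(leq_pmul2r c_gt0) mulnDl.
(* Left side: (p+1) D times sum_S i_S (D-1); right side: D(D-1) times
   sum_S (i_S (i_S-1) + (p+1)). *)
have -> : (p.+1 * b * (T - 1) * D * ncommon F n r =
           \sum_(S : 'M[F]_n.+2 | \rank S == r) p.+1 * #|meet K S| * (D * (D - 1)))%N.
  rewrite -big_distrl -big_distrr /=; move: K_pts; rewrite -big_distrl /=.
  move: (\sum_(S | _) _)%N => s Es.
  have -> : (p.+1 * s * (D * (D - 1)) = p.+1 * D * (s * (D - 1)))%N by ring.
  by rewrite Es; ring.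
rewrite mulnAC -K_K -mulnA -pts_pts big_distrl big_distrr -big_split /=.
apply: leq_sum => S /K_mod hS; rewrite -mulnDl leq_mul2r.
by rewrite mod1_quadratic ?orbT.
Qed.

End Variance.

Section Estimates.
Variable R : realFieldType.

(* For p >= 7, a quantity b in the window 3(p-1)Q/(2p) <= b < 2Q violates the
   quadratic inequality (p+1) Q (48 b - 49 Q) <= 48 b^2.  The certificate is
   4p^2 times the difference, written as a sum of nonnegative terms. *)
Lemma quadratic_gap (p Q b : R) : 7 <= p -> 0 < Q -> b < 2 * Q ->
  3 * (p - 1) * Q <= 2 * p * b -> 48 * b ^+ 2 < (p + 1) * Q * (48 * b - 49 * Q).
Proof.
move=> p7 Q0 b2 hb.
set cubic := 46 * p ^+ 3 - 314 * p ^+ 2 + 288 * p - 216.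
have cubic_gt0 : 0 < cubic.
  have -> : cubic = (p - 7) * ((p - 7) * (46 * (p - 7) + 652) + 2654) + 2192 by rewrite /cubic; ring.
  have : 0 <= (p - 7) * ((p - 7) * (46 * (p - 7) + 652) + 2654).
    by apply: mulr_ge0; [lra | apply: addr_ge0; [apply: mulr_ge0|]; lra].
  lra.
have window : 0 <= (2 * Q - b) * (2 * p * b - 3 * (p - 1) * Q) by apply: mulr_ge0; lra.
have certificate : 4 * p ^+ 2 * ((p + 1) * Q * (48 * b - 49 * Q) - 48 * b ^+ 2) =
  96 * p * ((2 * Q - b) * (2 * p * b - 3 * (p - 1) * Q)) +
  48 * (2 * p - 3) * (p - 1) * Q * (2 * p * b - 3 * (p - 1) * Q) + 2 * Q ^+ 2 * cubic.
  by rewrite /cubic; ring.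
have t1 : 0 <= 96 * p * ((2 * Q - b) * (2 * p * b - 3 * (p - 1) * Q)).
  by apply: mulr_ge0; first lra.
have t2 : 0 <= 48 * (2 * p - 3) * (p - 1) * Q * (2 * p * b - 3 * (p - 1) * Q).
  by apply: mulr_ge0; [apply: mulr_ge0; [apply: mulr_ge0; [apply: mulr_ge0|]|] | ]; lra.
have t3 : 0 < 2 * Q ^+ 2 * cubic by apply: mulr_gt0 => //; apply: mulr_gt0; rewrite ?exprn_gt0.
have : 0 < 4 * p ^+ 2 * ((p + 1) * Q * (48 * b - 49 * Q) - 48 * b ^+ 2).
  by rewrite certificate; lra.
by rewrite pmulr_rgt0 ?subr_gt0 //; apply: mulr_gt0; rewrite ?exprn_gt0 //; lra.
Qed.

(* Rewrite the variance
   inequality as (p+1)(T-1)(bD - T) <= b(b-1)D(D-1) and bound T-1 and bD-T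
   from below. *)
Lemma variance_to_quadratic (p Q D T b : R) : 0 <= p -> 0 <= Q -> 1 < D ->
  Q * (D - 1) <= T - 1 -> 48 * T <= 49 * Q * D -> 49 * Q <= 48 * b ->
  (p + 1) * b * (T - 1) * D <= b * (b - 1) * (D * (D - 1)) + (p + 1) * (T * (T - 1)) ->
  (p + 1) * Q * (48 * b - 49 * Q) <= 48 * b ^+ 2.
Proof.
move=> p0 Q0 D1 hA hC hb hvar.
have DD1 : 0 < D * (D - 1) by apply: mulr_gt0; lra.
have excess : D * (48 * b - 49 * Q) <= 48 * (b * D - T) by lra.
have hvar' : (p + 1) * (T - 1) * (48 * (b * D - T)) <= 48 * b ^+ 2 * (D * (D - 1)).
  have : 0 <= b * (D * (D - 1)) by apply: mulr_ge0; [lra | exact: ltW].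
  have -> : (p + 1) * (T - 1) * (48 * (b * D - T)) =
            48 * ((p + 1) * b * (T - 1) * D - (p + 1) * (T * (T - 1))) by ring.
  have -> : 48 * b ^+ 2 * (D * (D - 1)) =
            48 * (b * (b - 1) * (D * (D - 1)) + b * (D * (D - 1))) by ring.
  lra.
rewrite -(ler_pM2r DD1); apply: le_trans hvar'.
have -> : (p + 1) * Q * (48 * b - 49 * Q) * (D * (D - 1)) =
          (p + 1) * (Q * (D - 1)) * (D * (48 * b - 49 * Q)) by ring.
apply: ler_pM => //; last by apply: ler_wpM2l; lra.
- by apply: mulr_ge0; [lra | apply: mulr_ge0; lra].
- by apply: mulr_ge0; lra.
Qed.

(* D and T are the point numbers
   (qr - 1)/(q - 1) and (qr Q - 1)/(q - 1) of subspaces of vector dimension r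
   and r + k, where qr = q^r >= q^2 and Q = q^k >= 1; then T - 1 >= Q (D - 1) and
   48 T <= 49 Q D, and the variance inequality excludes
   3(Q - Q/p)/2 <= b < 2Q. *)
Lemma variance_bound (p q qr Q D T b : R) : 7 <= p -> 7 <= q -> q ^+ 2 <= qr ->
  1 <= Q -> D * (q - 1) = qr - 1 -> T * (q - 1) = qr * Q - 1 ->
  b < 2 * Q ->
  (p + 1) * b * (T - 1) * D <= b * (b - 1) * (D * (D - 1)) + (p + 1) * (T * (T - 1)) ->
  b < 3 * (Q - Q / p) / 2.
Proof.
move=> p7 q7 Rq Q1 eD eT b2 hvar.
have q1 : 0 < q - 1 by lra.
have D1 : 1 < D.
  by rewrite -(ltr_pM2r q1) mul1r eD; nra.
have eQD : Q * (D * (q - 1)) = Q * (qr - 1) by rewrite eD.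
have hA : Q * (D - 1) <= T - 1.
  have : 0 <= (T - 1 - Q * (D - 1)) * (q - 1) by nra.
  by rewrite pmulr_lge0 // subr_ge0.
have hC : 48 * T <= 49 * Q * D.
  have qr49 : 49 <= qr by nra.
  have : 0 <= (49 * Q * D - 48 * T) * (q - 1) by nra.
  by rewrite pmulr_lge0 // subr_ge0.
rewrite ltNge; apply/negP => hb.
have window : 3 * (p - 1) * Q <= 2 * p * b.
  move: hb; rewrite -(ler_pM2r (_ : 0 < 2 * p)); last lra.
  have -> : 3 * (Q - Q / p) / 2 * (2 * p) = 3 * (p - 1) * Q by field; lra.
  lra.
have b_large : 49 * Q <= 48 * b by nra.
have p0 : 0 <= p by lra.
have Q0 : 0 <= Q by lra.
have := quadratic_gap p7 (lt_le_trans ltr01 Q1) b2 window.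
by rewrite ltNge (variance_to_quadratic p0 Q0 D1 hA hC b_large hvar).
Qed.

Lemma variance_bound_nat (p q r k D T b : nat) : (7 <= p)%N -> (7 <= q)%N -> (2 <= r)%N ->
  (1 <= b)%N -> (D * (q - 1) = q ^ r - 1)%N -> (T * (q - 1) = q ^ r * q ^ k - 1)%N ->
  (b < 2 * q ^ k)%N ->
  (p.+1 * b * (T - 1) * D <= b * (b - 1) * (D * (D - 1)) + p.+1 * (T * (T - 1)))%N ->
  b%:R < 3 * ((q ^ k)%:R - (q ^ k)%:R / p%:R) / 2 :> R.
Proof.
move=> p7 q7 r2 b1 eD eT b2 hvar.
have q2r : (q * q <= q ^ r)%N by rewrite mulnn leq_pexp2l; lia.
have qk : (0 < q ^ k)%N by rewrite expn_gt0; lia.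
have D1 : (1 <= D)%N by nia.
have T1 : (1 <= T)%N by nia.
have nat_eq (x y : nat) : x = y -> x%:R = y%:R :> R by move=> ->.
apply: (@variance_bound p%:R q%:R (q ^ r)%:R _ D%:R T%:R).
- by rewrite ler_nat.
- by rewrite ler_nat.
- by rewrite -natrX ler_nat -mulnn.
- by rewrite ler1n.
- by move/nat_eq: eD; rewrite natrM !natrB ?expn_gt0 //; lia.
- by move/nat_eq: eT; rewrite !natrM !natrB ?muln_gt0 ?expn_gt0 ?natrM //; lia.
- by rewrite -(ltr_nat R) natrM in b2.
- by move: hvar; rewrite -(ler_nat R) !natrD !natrM !natrB // -natr1; lra.
Qed.

End Estimates.

Theorem mainTheorem1 (F : finFieldType) (p h n k : nat)
  (Hp : prime p) (Hp5 : (5 < p)%N) (Hh : (1 <= h)%N) (HF : #|F| = (p ^ h)%N)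
  (Hn : (2 <= n)%N) (Hk1 : (1 <= k)%N) (Hk2 : (k <= n - 1)%N)
  (B : {set 'M[F]_(n.+1)})
  (HB : minimal_blocking_set k B)
  (Hmod : forall S : 'M[F]_(n.+1), is_proj_subspace (n - k) S ->
            #|meet B S| = 1 %[mod p])
  (Hlow : (theta #|F| k < #|B|)%N) (Hup : (#|B| < 2 * #|F| ^ k)%N) :
  (#|B|%:R < (3 * ((#|F| ^ k)%:R - (#|F| ^ k)%:R / p%:R)) / 2 :> rat)%R.
Proof.
case: n Hn Hk2 B HB Hmod Hlow Hup => [//|n] _ Hk2 B [[B_pts _] _] Hmod Hlow Hup.
set q := #|F| in HF Hlow Hup *; set r := (n.+1 - k).+1.
have p_ne6 : p != 6%N by apply: contraTneq Hp => ->.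
have p7 : (7 <= p)%N by lia.
have q7 : (7 <= q)%N.
  by rewrite HF (leq_trans p7) // -{1}(expn1 p) leq_pexp2l //; lia.
have r_bounds : (2 <= r <= n.+2)%N by rewrite /r; lia.
have [r2 rN] := andP r_bounds.
have B_points : B \subset points F n.+1 by apply/subsetP => P /B_pts; rewrite inE.
pose D := #|meet (points F n.+1) (pid_mx r)|.
have card_D S : \rank S == r -> #|meet (points F n.+1) S| = D.
  by move/eqP=> rS; apply: card_points_in_rank; rewrite rS rank_pid_mx.
have p1 : (1 < p)%N by lia.
have hvar := variance_inequality p1 r_bounds B_points card_D Hmod.
apply: (@variance_bound_nat _ p q r k) hvar => //.
- by apply: leq_ltn_trans Hlow.
- by rewrite /D /q card_points_in rank_pid_mx.
- by rewrite /q card_points -expnD /r; congr (_ ^ _ - 1)%N; lia.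
Qed.
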